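(* Let $d\ge 1$ and $N\ge 1$, and let $\mathbf{a}_1,\dots,\mathbf{a}_N\in s'(\mathbb{Z}^d)$. Then the following are equivalent: (1) There exist $\mathbf{b}_1,\dots,\mathbf{b}_N\in s'(\mathbb{Z}^d)$ such that $\mathbf{b}_1\mathbf{a}_1+\cdots+\mathbf{b}_N\mathbf{a}_N=1$ (the constant function $1$ on $\mathbb{Z}^d$, products taken pointwise). (2) There exist $\delta>0$ and $K\in\mathbb{N}$ such that for all $\mathbf{n}\in\mathbb{Z}^d$, $$|\mathbf{a}_1(\mathbf{n})|+\cdots+|\mathbf{a}_N(\mathbf{n})|\ge \delta\,(1+\|\mathbf{n}\|_1)^{-K}.$$
   Context: For $\mathbf{n}\in\mathbb{Z}^d$, $\|\mathbf{n}\|_1$ denotes the $1$-norm. $s'(\mathbb{Z}^d)$ is the set of all maps $\mathbf{a}:\mathbb{Z}^d\to\mathbb{C}$ of at most polynomial growth, i.e. for which there exist $M>0$ and $k\in\mathbb{N}$ with $|\mathbf{a}(\mathbf{n})|\le M(1+\|\mathbf{n}\|_1)^k$ for all $\mathbf{n}\in\mathbb{Z}^d$. It is a commutative unital ring under pointwise addition and multiplication, with unit the constant function $1$. *)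

From mathcomp Require Import all_boot all_order all_algebra.
From mathcomp Require Import all_classical all_reals.
From mathcomp Require Import complex.
Set Implicit Arguments. Unset Strict Implicit. Unset Printing Implicit Defensive.
Import Order.TTheory GRing.Theory Num.Theory.
Local Open Scope ring_scope.

Definition norm1 (R : realType) (d : nat) (n : 'I_d -> int) : R :=
  \sum_(i < d) (`|n i|%:~R : R).

Definition cmod (R : realType) (z : R[i]) : R :=
  Num.sqrt (complex.Re z ^+ 2 + complex.Im z ^+ 2).

Definition in_s' (R : realType) (d : nat) (a : ('I_d -> int) -> R[i]) : Prop :=
  exists (M : R) (k : nat), 0 < M /\
    forall n, cmod (a n) <= M * (1 + norm1 R n) ^+ k.

(* If b_1 a_1 + ... + b_N a_N = 1 with |b_j(n)| <= M (1 + |n|_1)^k, the triangle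
   inequality gives 1 <= M (1 + |n|_1)^k (|a_1(n)| + ... + |a_N(n)|).  Conversely,
   writing T(n) = |a_1(n)| + ... + |a_N(n)|, the coefficients
   b_j(n) = conj(a_j(n)) / (|a_j(n)| T(n)) satisfy b_1 a_1 + ... + b_N a_N = 1 and
   |b_j(n)| <= 1 / T(n), which the lower bound on T turns into polynomial growth. *)
From mathcomp Require Import all_boot all_order all_algebra.
From mathcomp Require Import all_classical all_reals.
From mathcomp Require Import complex.
Set Implicit Arguments. Unset Strict Implicit. Unset Printing Implicit Defensive.
Import Order.TTheory GRing.Theory Num.Theory.
Local Open Scope ring_scope.

Section ComplexModulus.
Local Open Scope complex_scope.
Variable R : realType.
Implicit Types (x y : R[i]) (r : R).

Lemma cmodE x : (cmod x)%:C = `|x|.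
Proof. by rewrite normc_def; case: x. Qed.

Lemma cmod_ge0 x : 0 <= cmod x.
Proof. by rewrite -ler0c cmodE. Qed.

Lemma cmod1 : cmod (1 : R[i]) = 1.
Proof. by apply: complexI; rewrite cmodE normr1. Qed.

Lemma cmodM x y : cmod (x * y) = cmod x * cmod y.
Proof. by apply: complexI; rewrite cmodE normrM -!cmodE -rmorphM. Qed.

Lemma cmodJ x : cmod x^* = cmod x.
Proof. by apply: complexI; rewrite !cmodE normcJ. Qed.

Lemma ger0_cmod r : 0 <= r -> cmod r%:C = r.
Proof. by move=> r0; apply: complexI; rewrite cmodE ger0_norm // ler0c. Qed.

Lemma ler_cmod_sum N (x : 'I_N -> R[i]) :
  cmod (\sum_(j < N) x j) <= \sum_(j < N) cmod (x j).
Proof.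
rewrite -lecR cmodE (le_trans (ler_norm_sum _ _ _)) // rmorph_sum.
by apply: ler_sum => j _; rewrite -cmodE.
Qed.

Definition bezout_coef N (x : 'I_N -> R[i]) (j : 'I_N) : R[i] :=
  (x j)^* / (cmod (x j) * \sum_(i < N) cmod (x i))%:C.

Lemma bezout_coefK N (x : 'I_N -> R[i]) :
  0 < \sum_(i < N) cmod (x i) -> \sum_(j < N) bezout_coef x j * x j = 1.
Proof.
set T := \sum_(i < N) _ => T_gt0.
have coefK j : bezout_coef x j * x j = (cmod (x j) / T)%:C.
  rewrite /bezout_coef mulrAC [_^* * _]mulrC -sqr_normc -cmodE expr2.
  rewrite -rmorphM -fmorphV -rmorphM; congr (_%:C).
  have [->|xj0] := eqVneq (cmod (x j)) 0; first by rewrite !mul0r.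
  by rewrite invfM mulrA mulfK.
by rewrite (eq_bigr _ (fun j _ => coefK j)) -rmorph_sum -mulr_suml divff ?lt0r_neq0.
Qed.

Lemma cmod_bezout_coef N (x : 'I_N -> R[i]) j :
  cmod (bezout_coef x j) <= (\sum_(i < N) cmod (x i))^-1.
Proof.
have T_ge0 : 0 <= \sum_(i < N) cmod (x i) by apply: sumr_ge0 => i _; apply: cmod_ge0.
rewrite /bezout_coef cmodM cmodJ -fmorphV ger0_cmod; last first.
  by rewrite invr_ge0 mulr_ge0 ?cmod_ge0.
have [->|xj0] := eqVneq (cmod (x j)) 0; first by rewrite mul0r invr_ge0.
by rewrite invfM mulrA mulfV // mul1r.
Qed.

Lemma bezout_sum_cmod_ge N (b x : 'I_N -> R[i]) (M : R) :
  (forall j, cmod (b j) <= M) -> \sum_(j < N) b j * x j = 1 ->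
  1 <= M * \sum_(j < N) cmod (x j).
Proof.
move=> b_le sum1; rewrite -cmod1 -sum1 mulr_sumr.
apply: le_trans (ler_cmod_sum _) _; apply: ler_sum => j _.
by rewrite cmodM ler_wpM2r ?cmod_ge0.
Qed.

End ComplexModulus.

Section PolynomialGrowth.
Variables (R : realType) (d : nat).
Implicit Types n : 'I_d -> int.

Lemma norm1_ge0 n : 0 <= norm1 R n.
Proof. by apply: sumr_ge0 => i _; rewrite ler0z normr_ge0. Qed.

Lemma norm1D1_ge1 n : 1 <= 1 + norm1 R n.
Proof. by rewrite lerDl norm1_ge0. Qed.

Lemma norm1D1X_gt0 n k : 0 < (1 + norm1 R n) ^+ k.
Proof. by rewrite exprn_gt0 // (lt_le_trans ltr01) ?norm1D1_ge1. Qed.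

Lemma in_s'_uniform_bound N (b : 'I_N -> ('I_d -> int) -> R[i]) :
  (forall j, in_s' (b j)) ->
  exists (M : R) (k : nat), 0 < M /\
    forall j n, cmod (b j n) <= M * (1 + norm1 R n) ^+ k.
Proof.
move=> bs'; have /choice [M bM] := bs'.
have /choice [k bMk] := bM; pose M' := 1 + \sum_(j < N) M j.
have M_ge0 j : 0 <= M j by exact: ltW (bMk j).1.
have M_le j : M j <= M'.
  rewrite /M' (bigD1 j) //= addrCA lerDl addr_ge0 //.
  by apply: sumr_ge0 => i _.
exists M', (\sum_(j < N) k j)%N; split.
  by rewrite ltr_pwDl // sumr_ge0.
move=> j n; apply: le_trans ((bMk j).2 n) _.
apply: ler_pM; [exact: M_ge0 | exact: ltW (norm1D1X_gt0 _ _) | exact: M_le |].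
by rewrite ler_weXn2l ?norm1D1_ge1 // (bigD1 j) //= leq_addr.
Qed.

End PolynomialGrowth.

Theorem theorem1p1 (R : realType) (d N : nat) (hd : (1 <= d)%N) (hN : (1 <= N)%N)
  (a : 'I_N -> ('I_d -> int) -> R[i]) (ha : forall j, in_s' (a j)) :
  (exists b : 'I_N -> ('I_d -> int) -> R[i],
      (forall j, in_s' (b j)) /\
      forall n, \sum_(j < N) b j n * a j n = 1)
  <->
  (exists (delta : R) (K : nat), 0 < delta /\
      forall n, \sum_(j < N) cmod (a j n) >= delta * ((1 + norm1 R n) ^+ K)^-1).
Proof.
split=> [[b [bs' bezout]] | [delta [K [delta_gt0 lbound]]]].
- have [M [k [M_gt0 bM]]] := in_s'_uniform_bound bs'.
  exists M^-1, k; split=> [|n]; first by rewrite invr_gt0.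
  rewrite -invfM -[leLHS]mul1r ler_pdivrMr ?mulr_gt0 ?norm1D1X_gt0 // mulrC.
  exact: bezout_sum_cmod_ge (bM^~ n) (bezout n).
- have T_ge n : delta * ((1 + norm1 R n) ^+ K)^-1 <= \sum_(j < N) cmod (a j n).
    exact: lbound.
  have T_gt0 n : 0 < \sum_(j < N) cmod (a j n).
    by apply: lt_le_trans (T_ge n); rewrite mulr_gt0 ?invr_gt0 ?norm1D1X_gt0.
  exists (fun j n => bezout_coef (a^~ n) j); split=> [j|n]; last exact: bezout_coefK.
  exists delta^-1, K; split=> [|n]; first by rewrite invr_gt0.
  apply: le_trans (cmod_bezout_coef _ _) _.
  rewrite -[leRHS]invrK invfM invrK lef_pV2 ?posrE ?T_gt0 //.
  by rewrite mulr_gt0 ?invr_gt0 ?norm1D1X_gt0.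
Qed.
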